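(* Let $G$ be a connected simple graph with $n$ vertices and $n+1$ edges belonging to the class $\mathcal{A}(p,q,l)$ for some $p,q,l$. Then $\operatorname{avm}(G)\ge \operatorname{avm}(\theta_n^1(3,3))$, with equality if and only if $G\cong \theta_n^1(3,3)$.
   Context: For a finite simple graph $G$, $\operatorname{avm}(G)$ is the average of $|M|$ over all maximal matchings $M$ of $G$ (a matching is maximal if it is not properly contained in another matching). A connected graph with $n$ vertices and $n+1$ edges contains two induced cycles $C_p$ and $C_q$ (of lengths $p$ and $q$); it belongs to $\mathcal{A}(p,q,l)$ if these cycles have a common path of length $l\ge 1$ (so the union of the cycles is a theta graph). $\theta_n^1(3,3)$ is the graph obtained from two triangles sharing an edge $uv$ (vertices $u,v,x,y$, edges $uv,ux,uy,vx,vy$) by attaching $n-4$ pendant edges (new leaves) to $u$. *)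

From mathcomp Require Import all_boot all_order all_algebra.
Set Implicit Arguments. Unset Strict Implicit. Unset Printing Implicit Defensive.
Import Order.TTheory GRing.Theory Num.Theory.

Section Graph.
Variables (T : finType) (g : rel T).

Definition simple_graph : Prop := symmetric g /\ irreflexive g.

Definition connected_graph : Prop := forall x y : T, connect g x y.

Definition edges : {set {set T}} :=
  [set e | [exists x, exists y, g x y && (e == [set x; y])]].

Definition is_matching (M : {set {set T}}) : bool :=
  (M \subset edges) &&
  [forall e1 in M, forall e2 in M, (e1 != e2) ==> [disjoint e1 & e2]].

Definition maximal_matching (M : {set {set T}}) : bool :=
  is_matching M &&
  [forall N : {set {set T}}, (is_matching N && (M \subset N)) ==> (N == M)].

Definition avm : rat :=
  ((\sum_(M : {set {set T}} | maximal_matching M) #|M|)%:R /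
   (#|[set M : {set {set T}} | maximal_matching M]|)%:R)%R.

(* s is a cycle of G (as a cyclic sequence of distinct vertices, length >= 3)
   which is induced: two cycle vertices are adjacent iff consecutive. *)
Definition induced_cycle (s : seq T) : Prop :=
  [/\ uniq s, 3 <= size s, cycle g s &
      forall x y, x \in s -> y \in s -> g x y -> (y == next s x) || (y == prev s x)].

(* G belongs to A(p,q,l): two distinct induced cycles of lengths p and q whose
   common part is a path of length l >= 1. *)
Definition classA (p q l : nat) : Prop :=
  exists (s1 s2 : seq T) (x : T) (P : seq T),
    [/\ induced_cycle s1 /\ size s1 = p, induced_cycle s2 /\ size s2 = q,
        [set v in s1] != [set v in s2], 1 <= l &
        [/\ uniq (x :: P), size P = l, path g x P &
        [set v in s1] :&: [set v in s2] = [set v in x :: P]]].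

End Graph.

(* theta_n^1(3,3) on vertex set 'I_n: u = 0, v = 1, x = 2, y = 3,
   edges uv, ux, uy, vx, vy, and pendant edges u k for k >= 4. *)
Definition theta_adj (n : nat) : rel 'I_n :=
  fun i j =>
    (i != j) &&
    ((minn i j == 0) || ((minn i j == 1) && ((maxn i j == 2) || (maxn i j == 3)))).

Definition isomorphic (T U : finType) (g : rel T) (h : rel U) : Prop :=
  exists f : T -> U, bijective f /\ forall x y, h (f x) (f y) = g x y.
Arguments theta_adj n : clear implicits.

(* If some edge ab meets every edge, put A = N(a) \ {b} and B = N(b) \ {a}.
   When |A|, |B| >= 2 the maximal matchings are {ab} and the {ac, bd} with
   c in A, d in B, c <> d; if K is the number of the latter, avm = (2K+1)/(K+1),
   which increases with K, and K = |A||B| - |A :&: B|.  In a connected graph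
   with n+1 edges a dominating edge forces |A| + |B| = n and |A :&: B| = 2, so
   K is smallest, namely 2(n-3), exactly when |A| or |B| is 2, i.e. when the
   graph is theta_n^1(3,3).  If no edge dominates, every maximal matching has
   at least two edges and avm >= 2 > avm(theta_n^1(3,3)). *)

From mathcomp Require Import all_boot all_order all_algebra.
From mathcomp Require Import perm zify.
Import Order.TTheory GRing.Theory Num.Theory.

Set Implicit Arguments. Unset Strict Implicit. Unset Printing Implicit Defensive.

Section Matchings.
Variables (T : finType) (g : rel T).

Definition covered (M : {set {set T}}) (w : T) := [exists e in M, w \in e].

Lemma edgesP e : reflect (exists x y, g x y /\ e = [set x; y]) (e \in edges g).
Proof.
rewrite inE; apply: (iffP existsP) => [[x /existsP [y /andP [gxy /eqP ->]]]|].
  by exists x, y.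
by move=> [x [y [gxy ->]]]; exists x; apply/existsP; exists y; rewrite gxy eqxx.
Qed.

Lemma is_matchingE M : is_matching g M = (M \subset edges g) && trivIset M.
Proof.
congr (_ && _); apply/forall_inP/trivIsetP => [dM e1 e2 e1M e2M | dM e1 e1M].
  by move/forall_inP: (dM e1 e1M) => /(_ e2 e2M) /implyP.
by apply/forall_inP => e2 e2M; apply/implyP; apply: dM.
Qed.

Lemma maximal_matchingP M :
  reflect (is_matching g M /\ forall N, is_matching g N -> M \subset N -> N = M)
          (maximal_matching g M).
Proof.
apply: (iffP andP) => [[mM /forallP maxM] | [mM maxM]]; split => //.
  by move=> N mN sMN; apply/eqP; move/implyP: (maxM N); apply; rewrite mN.
by apply/forallP => N; apply/implyP => /andP [mN sMN]; rewrite (maxM N mN sMN).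
Qed.

Lemma matching_sub_edges M : is_matching g M -> M \subset edges g.
Proof. by rewrite is_matchingE => /andP []. Qed.

Lemma matching_edge_eq M e1 e2 w : is_matching g M -> e1 \in M -> e2 \in M ->
  w \in e1 -> w \in e2 -> e1 = e2.
Proof.
rewrite is_matchingE => /andP [_ /trivIsetP dM] e1M e2M we1 we2.
apply/eqP; apply: contraTT we2 => /(dM _ _ e1M e2M) dis; by rewrite (disjointFr dis we1).
Qed.

Lemma maximal_matching_covered M x y :
  maximal_matching g M -> g x y -> covered M x || covered M y.
Proof.
move=> /maximal_matchingP [mM maxM] gxy; apply: contraT; rewrite negb_or.
move=> /andP [/exists_inPn xM /exists_inPn yM].
have xyM e : e \in M -> [disjoint [set x; y] & e].
  move=> eM; rewrite disjoints_subset; apply/subsetP => w /set2P [] ->;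
  by rewrite inE ?(xM e eM) ?(yM e eM).
have mM' : is_matching g ([set x; y] |: M).
  move: mM; rewrite !is_matchingE subUset sub1set => /andP [-> /trivIsetP dM].
  rewrite andbT; apply/andP; split; first by apply/edgesP; exists x, y.
  apply/trivIsetP => e1 e2 /setU1P [-> | e1M] /setU1P [-> | e2M]; rewrite ?eqxx //.
  - by move=> _; apply: xyM.
  - by move=> _; rewrite disjoint_sym; apply: xyM.
  - exact: dM.
have xyM' : [set x; y] \in M by rewrite -(maxM _ mM' (subsetUr _ _)) setU11.
by move: (xM _ xyM'); rewrite set21.
Qed.

Lemma exists_maximal_matching : exists M, maximal_matching g M.
Proof.
have m0 : is_matching g set0.
  by rewrite is_matchingE sub0set; apply/trivIsetP => e; rewrite inE.
case: (arg_maxnP (fun M : {set {set T}} => #|M|) m0) => M mM Mmax.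
exists M; apply/maximal_matchingP; split => // N mN sMN.
by apply/eqP; rewrite eq_sym eqEcard sMN; exact: Mmax.
Qed.
End Matchings.

Lemma imset_can (aT rT : finType) (f : aT -> rT) (f' : rT -> aT) :
  cancel f f' -> cancel (fun A : {set aT} => f @: A) (fun B : {set rT} => f' @: B).
Proof. by move=> fK A; rewrite -imset_comp (eq_imset _ fK) imset_id. Qed.

Section Transport.
Variables (T U : finType) (g : rel T) (h : rel U) (f : T -> U).
Hypothesis hf : forall x y, h (f x) (f y) = g x y.

Lemma edge_imset e : e \in edges g -> f @: e \in edges h.
Proof.
move=> /edgesP [x [y [gxy ->]]]; apply/edgesP; exists (f x), (f y).
by rewrite hf imsetU !imset_set1.
Qed.

Lemma matching_imset (M : {set {set T}}) : injective f ->
  is_matching g M -> is_matching h [set f @: (e : {set T}) | e in M].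
Proof.
move=> f_inj; rewrite !is_matchingE imset_trivIset //.
move=> /andP [sM ->]; rewrite andbT.
by apply/subsetP => _ /imsetP [e eM ->]; apply: edge_imset (subsetP sM e eM).
Qed.
End Transport.

Lemma maximal_matching_imset (T U : finType) (g : rel T) (h : rel U)
    (f : T -> U) (f' : U -> T) (M : {set {set T}}) :
  cancel f f' -> cancel f' f -> (forall x y, h (f x) (f y) = g x y) ->
  maximal_matching g M -> maximal_matching h [set f @: (e : {set T}) | e in M].
Proof.
move=> fK f'K hf /maximal_matchingP [mM maxM]; apply/maximal_matchingP.
have hf' u v : g (f' u) (f' v) = h u v by rewrite -hf !f'K.
have fMK := imset_can (imset_can fK); have fM'K := imset_can (imset_can f'K).
split=> [|N mN sMN]; first exact: (matching_imset hf (can_inj fK) mM).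
rewrite -[N]fM'K (maxM _ (matching_imset hf' (can_inj f'K) mN)) //.
by rewrite -[M]fMK; apply: imsetS.
Qed.

Lemma avm_iso (T U : finType) (g : rel T) (h : rel U) : isomorphic g h -> avm g = avm h.
Proof.
move=> [f [[f' fK f'K] hf]].
have hf' u v : g (f' u) (f' v) = h u v by rewrite -hf !f'K.
pose fM (M : {set {set T}}) := [set f @: (e : {set T}) | e in M].
have fM_bij : bijective fM.
  by exists (fun N : {set {set U}} => [set f' @: (e : {set U}) | e in N]);
    apply: imset_can; apply: imset_can.
have maxE M : maximal_matching h (fM M) = maximal_matching g M.
  apply/idP/idP => [|/(maximal_matching_imset fK f'K hf) //].
  by move/(maximal_matching_imset f'K fK hf'); rewrite (imset_can (imset_can fK)).
rewrite /avm -!sum1_card !(reindex fM (onW_bij _ fM_bij)) /=.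
rewrite (eq_bigl _ _ maxE); congr (_%:R / _%:R)%R.
  by apply: eq_bigr => M _; rewrite card_imset //; apply: imset_inj; apply: can_inj fK.
by apply: eq_bigl => M; rewrite !inE maxE.
Qed.

Lemma set2_injr (T : finType) (x : T) : injective (fun y => [set x; y]).
Proof.
move=> y y' /setP E; have /set2P [yx | //] : y \in [set x; y'] by rewrite -E set22.
have /set2P [y'x | //] : y' \in [set x; y] by rewrite E set22.
by rewrite yx y'x.
Qed.

Definition nbr (T : finType) (g : rel T) (a : T) : {set T} := [set c | g a c].

Definition dominating_edge (T : finType) (g : rel T) (a b : T) : bool :=
  g a b && [forall x, forall y, g x y ==> [|| x == a, x == b, y == a | y == b]].

Section Dominating.
Variables (T : finType) (g : rel T) (a b : T).
Hypotheses (gs : symmetric g) (gi : irreflexive g).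
Hypothesis dom : dominating_edge g a b.

Lemma dominating_adj : g a b.
Proof. by case/andP: dom. Qed.

Lemma dominating_hit x y : g x y -> [|| x == a, x == b, y == a | y == b].
Proof. by case/andP: dom => _ /forallP /(_ x) /forallP /(_ y) /implyP. Qed.

Lemma dominating_edgeC : dominating_edge g b a.
Proof.
rewrite /dominating_edge gs dominating_adj; apply/forallP => x; apply/forallP => y.
by apply/implyP => /dominating_hit; case/or4P => ->; rewrite ?orbT.
Qed.

Lemma dominating_neq : a != b.
Proof. by apply: contraTneq dominating_adj => ->; rewrite gi. Qed.

Lemma dominating_adjE x y :
  g x y = [|| (x == a) && g a y, (x == b) && g b y, (y == a) && g a x | (y == b) && g b x].
Proof.
apply/idP/idP => [gxy | ].
  have gyx : g y x by rewrite gs.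
  by case/or4P: (dominating_hit gxy) => /eqP exy; subst; rewrite ?gxy ?gyx eqxx /= ?orbT.
by case/or4P => /andP [/eqP -> //]; rewrite gs.
Qed.

Lemma edge_set2 e x : e \in edges g -> x \in e -> exists2 y, g x y & e = [set x; y].
Proof.
move=> /edgesP [u [v [guv ->]]] /set2P [] ->; first by exists v.
by exists u; rewrite 1?gs // setUC.
Qed.

Lemma dominating_edge_hit e : e \in edges g -> (a \in e) || (b \in e).
Proof.
by move=> /edgesP [x [y [gxy ->]]]; case/or4P: (dominating_hit gxy) => /eqP ->;
   rewrite !in_set2 !eqxx ?orbT.
Qed.

Lemma dominating_covered M : 1 < #|nbr g a :\ b| ->
  maximal_matching g M -> covered M a.
Proof.
move=> A2 maxM; have [mM _] := maximal_matchingP _ _ maxM.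
apply: contraT => aM; have /orP [] := maximal_matching_covered maxM dominating_adj.
  by rewrite (negbTE aM).
move=> /exists_inP [e eM be]; move/exists_inPn: aM => aM.
have [d gbd ebd] := edge_set2 (subsetP (matching_sub_edges mM) e eM) be.
have /card_gt0P [c] : 0 < #|nbr g a :\ b :\ d|.
  by move: A2; rewrite (cardsD1 d (nbr g a :\ b)); case: (d \in _); lia.
rewrite !inE => /and3P [cd cb gac].
have [/exists_inP [e' /aM /negP //] | /exists_inP [e' e'M ce']] :=
  orP (maximal_matching_covered maxM gac).
have /orP [ae' | be'] := dominating_edge_hit (subsetP (matching_sub_edges mM) e' e'M).
  by move: (aM e' e'M); rewrite ae'.
move: ce'; rewrite (matching_edge_eq mM e'M eM be' be) ebd in_set2.
by rewrite (negbTE cd) (negbTE cb).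
Qed.

Lemma dominating_matching_set2 M ea eb : is_matching g M ->
  ea \in M -> a \in ea -> eb \in M -> b \in eb -> M = [set ea; eb].
Proof.
move=> mM eaM aea ebM beb; apply/eqP; rewrite eqEsubset; apply/andP; split.
  apply/subsetP => e eM; rewrite in_set2.
  case/orP: (dominating_edge_hit (subsetP (matching_sub_edges mM) e eM)) => [ae | be].
    by rewrite (matching_edge_eq mM eM eaM ae aea) eqxx.
  by rewrite (matching_edge_eq mM eM ebM be beb) eqxx orbT.
by apply/subsetP => e /set2P [] ->.
Qed.

Lemma dominating_maximal M :
  is_matching g M -> covered M a -> covered M b -> maximal_matching g M.
Proof.
move=> mM /exists_inP [ea eaM aea] /exists_inP [eb ebM beb].
apply/maximal_matchingP; split => // N mN /subsetP sMN.
rewrite (dominating_matching_set2 mM eaM aea ebM beb).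
exact: dominating_matching_set2 mN (sMN _ eaM) aea (sMN _ ebM) beb.
Qed.
End Dominating.

(* One maximal matching of size 1 and K of size 2. *)
Definition avm_dominated (K : nat) : rat := ((2 * K).+1%:R / K.+1%:R)%R.

Section Counting.
Variables (T : finType) (g : rel T) (a b : T).
Hypotheses (gs : symmetric g) (gi : irreflexive g).
Hypothesis dom : dominating_edge g a b.
Let A := nbr g a :\ b.
Let B := nbr g b :\ a.
Hypotheses (A2 : 1 < #|A|) (B2 : 1 < #|B|).

Let pairs := [set cd in setX A B | cd.1 != cd.2].
Let pair_matching (cd : T * T) : {set {set T}} := [set [set a; cd.1]; [set b; cd.2]].

Lemma card_pairs : #|pairs| = #|A| * #|B| - #|A :&: B|.
Proof.
pose D := [set (c, c) | c in A :&: B].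
have <- : #|D| = #|A :&: B| by apply: card_imset => c d [].
rewrite -cardsX -(cardsID D (setX A B)).
have -> : setX A B :&: D = D.
  by apply/setIidPr/subsetP => _ /imsetP [c /setIP [cA cB] ->]; rewrite in_setX cA cB.
have -> : setX A B :\: D = pairs.
  have memD c d : ((c, d) \in D) = (c == d) && (c \in A :&: B).
    apply/imsetP/andP => [[x xAB [-> ->]] | [/eqP -> cAB]]; [by rewrite eqxx | by exists d].
  apply/setP => -[c d]; rewrite in_setD memD in_setI /pairs in_set !in_setX /=.
  case: (c =P d) => [-> | _] /=; last by rewrite andbT.
  by rewrite andbF; case: (d \in A); case: (d \in B).
by rewrite addKn.
Qed.

Let mem_pairs c d : ((c, d) \in pairs) = [&& g a c, g b d, c != b, d != a & c != d].
Proof.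
rewrite !inE /=.
by case: (g a c); case: (g b d); case: (c == b); case: (d == a); case: (c == d).
Qed.

Lemma maximal_matching_ab : maximal_matching g [set [set a; b]].
Proof.
apply: (dominating_maximal dom); last 2 first.
- by apply/exists_inP; exists [set a; b]; rewrite ?set11 ?set21.
- by apply/exists_inP; exists [set a; b]; rewrite ?set11 ?set22.
rewrite is_matchingE trivIset1 andbT sub1set.
by apply/edgesP; exists a, b; rewrite (dominating_adj dom).
Qed.

Lemma maximal_pair_matching cd : cd \in pairs -> maximal_matching g (pair_matching cd).
Proof.
case: cd => c d; rewrite mem_pairs => /and5P [gac gbd cb da cd].
apply: (dominating_maximal dom); last 2 first.
- by apply/exists_inP; exists [set a; c]; rewrite ?set21 ?set22.
- by apply/exists_inP; exists [set b; d]; rewrite ?set21 ?set22.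
have ab := dominating_neq gi dom.
have dj : [disjoint [set a; c] & [set b; d]].
  rewrite disjoints_subset; apply/subsetP => x /set2P [] ->;
  by rewrite !inE negb_or ?ab ?cb ?cd // eq_sym da.
rewrite is_matchingE; apply/andP; split.
  by apply/subsetP => e /set2P [] ->; apply/edgesP; [exists a, c | exists b, d].
apply/trivIsetP => e1 e2 /set2P [] -> /set2P [] ->; rewrite ?eqxx // => _.
by rewrite disjoint_sym.
Qed.

Lemma maximal_matching_dominating M : maximal_matching g M ->
  M = [set [set a; b]] \/ exists2 cd, cd \in pairs & M = pair_matching cd.
Proof.
move=> maxM; have [mM _] := maximal_matchingP _ _ maxM.
have sM := subsetP (matching_sub_edges mM).
have /exists_inP [ea eaM aea] := dominating_covered gs dom A2 maxM.
have /exists_inP [eb ebM beb] := dominating_covered gs (dominating_edgeC gs dom) B2 maxM.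
rewrite (dominating_matching_set2 dom mM eaM aea ebM beb).
have [c gac eac] := edge_set2 gs (sM _ eaM) aea.
have [d gbd ebd] := edge_set2 gs (sM _ ebM) beb.
have eqab x : x \in ea -> x \in eb -> [set a; c] = [set b; d].
  by move=> xa xb; rewrite -eac -ebd (matching_edge_eq mM eaM ebM xa xb).
case: (c =P b) => [cb | /eqP cb].
  have bea : b \in ea by rewrite eac cb set22.
  by left; rewrite -(matching_edge_eq mM eaM ebM bea beb) setUid eac cb.
right; exists (c, d); last by rewrite /pair_matching eac ebd.
have da : d != a.
  apply: contra_neq cb => da; apply: (@set2_injr _ a).
  by rewrite /= (eqab a) ?ebd ?da ?set22 // setUC.
have cd : c != d.
  apply: contra_neq cb => cd; have /set2P [ba | //] : b \in [set a; c].
    by rewrite (eqab c) ?eac ?ebd -?cd ?set21 ?set22.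
  by move: (dominating_neq gi dom); rewrite ba eqxx.
by rewrite mem_pairs gac gbd cb da cd.
Qed.

Lemma maximal_matchings_dominating :
  [set M | maximal_matching g M] =
  [set [set a; b]] |: [set pair_matching cd | cd in pairs].
Proof.
apply/setP => M; rewrite inE in_setU1; apply/idP/orP.
  case/maximal_matching_dominating => [-> | [cd cdP ->]]; first by left.
  by right; apply: imset_f.
case=> [/eqP -> | /imsetP [cd cdP ->]]; first exact: maximal_matching_ab.
exact: maximal_pair_matching.
Qed.

Lemma pair_matching_inj : {in pairs &, injective pair_matching}.
Proof.
move=> [c d] [c' d'] _ /maximal_pair_matching /maximal_matchingP [mF' _] E.
have [ac bd] : [set a; c] \in pair_matching (c', d') /\
               [set b; d] \in pair_matching (c', d').
  by rewrite -E !in_set2 !eqxx orbT.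
have /set2_injr -> := matching_edge_eq mF' ac (set21 _ _) (set21 _ _) (set21 _ _).
by have /set2_injr -> := matching_edge_eq mF' bd (set22 _ _) (set21 _ _) (set21 _ _).
Qed.

Lemma avm_dominating : avm g = avm_dominated (#|A| * #|B| - #|A :&: B|).
Proof.
rewrite -card_pairs.
have ab_notin : [set [set a; b]] \notin [set pair_matching cd | cd in pairs].
  apply/imsetP => -[[c d]]; rewrite mem_pairs => /and5P [_ _ cb _ _] E.
  have : [set a; c] \in [set [set a; b]] by rewrite E set21.
  by rewrite in_set1 => /eqP /set2_injr cb'; rewrite cb' eqxx in cb.
have card2 cd : cd \in pairs -> #|pair_matching cd| = 2.
  case: cd => c d; rewrite mem_pairs cards2 => /and5P [_ _ _ da _].
  suff -> : [set a; c] != [set b; d] by [].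
  apply/negP => /eqP /setP /(_ a); rewrite !in_set2 eqxx.
  by rewrite (negbTE (dominating_neq gi dom)) (eq_sym a d) (negbTE da).
rewrite /avm (eq_bigl (fun M => M \in [set M | maximal_matching g M])); last first.
  by move=> M; rewrite inE.
rewrite maximal_matchings_dominating big_setU1 //= (big_imset _ pair_matching_inj) /=.
rewrite cardsU1 ab_notin (card_in_imset pair_matching_inj) cards1.
rewrite (eq_bigr (fun _ => 2)) => [|cd /card2 //].
by rewrite sum_nat_const /avm_dominated /= !add1n mulnC.
Qed.
End Counting.

Lemma ler_avm_dominated m n : (avm_dominated m <= avm_dominated n)%R = (m <= n).
Proof.
rewrite ler_pdivrMr ?ltr0n // mulrAC ler_pdivlMr ?ltr0n // -!natrM ler_nat.
apply/idP/idP; nia.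
Qed.

Lemma avm_dominated_inj : injective avm_dominated.
Proof.
move=> m n /eqP; rewrite eq_le !ler_avm_dominated -eqn_leq; exact/eqP.
Qed.

Lemma avm_dominated_lt2 n : (avm_dominated n < 2%:R)%R.
Proof. rewrite ltr_pdivrMr ?ltr0n // -natrM ltr_nat; lia. Qed.

Lemma theta_sym n : symmetric (theta_adj n).
Proof. by move=> i j; rewrite /theta_adj eq_sym minnC maxnC. Qed.

Lemma theta_irr n : irreflexive (theta_adj n).
Proof. by move=> i; rewrite /theta_adj eqxx. Qed.

Section Theta.
Variable n : nat.
Local Notation theta := (theta_adj n.+4).

Lemma theta_adj0 j : theta ord0 j = (j != ord0).
Proof. by rewrite /theta_adj -!val_eqE /=; case: (val j). Qed.

Lemma theta_adj1 j : theta (inord 1) j = (j \in [set ord0; inord 2; inord 3]).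
Proof.
rewrite /theta_adj !inE -!val_eqE /= !inordK //.
case: j => -[|[|[|[|j]]]] //=.
Qed.

Lemma theta_dominating : dominating_edge theta ord0 (inord 1).
Proof.
rewrite /dominating_edge theta_adj0 -val_eqE /= inordK //=.
apply/forallP => i; apply/forallP => j; apply/implyP.
rewrite /theta_adj -!val_eqE /= !inordK //; lia.
Qed.

Lemma avm_theta : avm theta = avm_dominated (2 * n.+1).
Proof.
have eA : nbr theta ord0 :\ inord 1 = ~: [set ord0; inord 1].
  by apply/setP => j; rewrite !inE theta_adj0 negb_or andbC.
have eB : nbr theta (inord 1) :\ ord0 = [set inord 2; inord 3].
  apply/setP => j; rewrite !inE theta_adj1 !inE.
  by case: (j =P ord0) => [-> | _]; rewrite // -!val_eqE /= !inordK.
have cA : #|~: [set ord0; inord 1 : 'I_n.+4]| = n.+2.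
  have := cardsC [set ord0; inord 1 : 'I_n.+4].
  by rewrite cards2 -val_eqE /= inordK // card_ord => -[].
have cB : #|[set inord 2; inord 3 : 'I_n.+4]| = 2.
  by rewrite cards2 -val_eqE /= !inordK.
have eAB : ~: [set ord0; inord 1] :&: [set inord 2; inord 3] =
           [set inord 2; inord 3 : 'I_n.+4].
  apply/setIidPr/subsetP => j; rewrite !inE -!val_eqE /= !inordK //; lia.
rewrite (avm_dominating (@theta_sym _) (@theta_irr _) theta_dominating);
  rewrite ?eA ?eB ?eAB ?cA ?cB //.
by congr avm_dominated; lia.
Qed.
End Theta.

Lemma avm_theta_gt3 n : 3 < n -> avm (theta_adj n) = avm_dominated (2 * (n - 3)).
Proof. by case: n => [|[|[|[|n]]]] // _; rewrite avm_theta. Qed.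

Lemma uniq_size_le_card (T : finType) (s : seq T) : uniq s -> size s <= #|T|.
Proof. by move/card_uniqP <-; apply: max_card. Qed.

Lemma perm_map_uniq (I : finType) (s t : seq I) : uniq s -> uniq t -> size s = size t ->
  exists p : {perm I}, map p s = t.
Proof.
elim: s t => [|x s IH] [|y t] //=; first by exists 1%g.
move=> /andP [xs us] /andP [yt ut] [sz]; have [p hp] := IH t us ut sz.
exists (p * tperm y (p x))%g; rewrite permM tpermR; congr (_ :: _).
rewrite -hp; apply/eq_in_map => z zs; rewrite permM tpermD //.
  by apply: contraNneq yt => ->; rewrite -hp map_f.
by rewrite (inj_eq perm_inj); apply: contraNneq xs => ->.
Qed.

Lemma dominating_iso (T U : finType) (g : rel T) (h : rel U) a b (f : T -> U) :
  symmetric g -> symmetric h -> bijective f ->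
  dominating_edge g a b -> dominating_edge h (f a) (f b) ->
  (forall x, h (f a) (f x) = g a x) -> (forall x, h (f b) (f x) = g b x) ->
  isomorphic g h.
Proof.
move=> gs hs f_bij gd hd ha hb; exists f; split => // x y.
by rewrite (dominating_adjE hs hd) (dominating_adjE gs gd) !(inj_eq (bij_inj f_bij)) !ha !hb.
Qed.

Lemma iso_theta (T : finType) (g : rel T) a b x y :
  symmetric g -> dominating_edge g a b -> uniq [:: a; b; x; y] ->
  (forall z, g a z = (z != a)) -> (forall z, g b z = (z \in [set a; x; y])) ->
  isomorphic g (theta_adj #|T|).
Proof.
move=> gs dom abxy ga gb.
have [n Tn] : exists n, #|T| = n.+4.
  by exists (#|T| - 4); have := uniq_size_le_card abxy; rewrite /=; lia.
rewrite Tn; pose e z := cast_ord Tn (enum_rank z).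
have e_inj : injective e by move=> u v /cast_ord_inj /enum_rank_inj.
have [|||p [fa fb fx fy]] := @perm_map_uniq _ (map e [:: a; b; x; y])
  [:: ord0; inord 1; inord 2; inord 3]; rewrite ?(map_inj_uniq e_inj) //.
  by rewrite /= !inE -!val_eqE /= !inordK.
have f_inj : injective (fun z => p (e z)) by move=> u v /perm_inj /e_inj.
have f_bij : bijective (fun z => p (e z)) by apply: inj_card_bij; rewrite // card_ord Tn.
apply: (dominating_iso gs (@theta_sym _) f_bij dom); rewrite /= ?fa ?fb.
- exact: theta_dominating.
- by move=> z; rewrite theta_adj0 ga -fa (inj_eq f_inj).
- by move=> z; rewrite theta_adj1 gb !inE -fa -fx -fy !(inj_eq f_inj).
Qed.

Section ConnectedDominating.
Variables (T : finType) (g : rel T) (a b : T).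
Hypotheses (gs : symmetric g) (gi : irreflexive g).
Hypothesis dom : dominating_edge g a b.
Hypotheses (conn : connected_graph g) (hE : #|edges g| = #|T|.+1).
Let A := nbr g a :\ b.
Let B := nbr g b :\ a.

Lemma card_edges_dominating : #|edges g| = (#|A| + #|B|).+1.
Proof.
pose Ea := [set [set a; c] | c in A]; pose Eb := [set [set b; d] | d in B].
have edgesE : edges g = [set a; b] |: (Ea :|: Eb).
  apply/setP => e; rewrite in_setU1 in_setU; apply/idP/idP => [eE | ].
    case/orP: (dominating_edge_hit dom eE) => [ae | be].
      have [c gac ->] := edge_set2 gs eE ae.
      case: (c =P b) => [-> | /eqP cb]; first by rewrite eqxx.
      by apply/or3P; apply: Or32; apply: imset_f; rewrite !inE cb.
    have [d gbd ->] := edge_set2 gs eE be.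
    case: (d =P a) => [-> | /eqP da]; first by rewrite setUC eqxx.
    by apply/or3P; apply: Or33; apply: imset_f; rewrite !inE da.
  case/or3P => [/eqP -> | /imsetP [c cA ->] | /imsetP [d dB ->]]; apply/edgesP.
  - by exists a, b; rewrite (dominating_adj dom).
  - by exists a, c; move: cA; rewrite !inE => /andP [].
  - by exists b, d; move: dB; rewrite !inE => /andP [].
have abE : [set a; b] \notin Ea :|: Eb.
  rewrite in_setU; apply/norP; split; apply/imsetP => -[x].
    by rewrite !inE => /andP [xb _] /set2_injr bx; rewrite bx eqxx in xb.
  rewrite !inE => /andP [xa _] E.
  by move: xa; rewrite -(set2_injr (etrans (setUC [set b] [set a]) E)) eqxx.
have EaEb : [disjoint Ea & Eb].
  rewrite disjoints_subset; apply/subsetP => _ /imsetP [c cA ->]; rewrite inE.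
  apply/imsetP => -[d dB E]; have /set2P [ab | ad] : a \in [set b; d] by rewrite -E set21.
    by move: (dominating_neq gi dom); rewrite ab eqxx.
  by move: dB; rewrite -ad !inE eqxx.
rewrite edgesE cardsU1 abE cardsU (disjoint_setI0 EaEb) cards0 subn0.
by rewrite !card_imset //; apply: set2_injr.
Qed.

Lemma dominating_connected_cover : A :|: B = ~: [set a; b].
Proof.
apply/setP => c; rewrite in_setU in_setC in_set2; apply/idP/idP.
  rewrite !inE negb_or => /orP [] /andP [cx gxc]; rewrite cx ?andbT /=;
  by apply: contraTneq gxc => ->; rewrite gi.
case/norP => ca cb; case/connectP: (conn c a) => -[/= _ ca' | y p /= /andP [gcy _] _].
  by rewrite ca' eqxx in ca.
case/or4P: (dominating_hit dom gcy) => /eqP E.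
- by rewrite E eqxx in ca.
- by rewrite E eqxx in cb.
- by rewrite !inE gs -E gcy cb.
- by rewrite !inE (gs b) -E gcy ca orbT.
Qed.

Lemma dominating_cards : #|A| + #|B| = #|T| /\ #|A :&: B| = 2.
Proof.
have sumAB : #|A| + #|B| = #|T|.
  by move: hE; rewrite card_edges_dominating => -[].
split=> //; have := cardsC [set a; b]; rewrite cards2 (dominating_neq gi dom).
have := cardsU A B; rewrite dominating_connected_cover.
have : #|A :&: B| <= #|A| by apply/subset_leq_card/subsetIl.
lia.
Qed.

Lemma dominating_theta_iso : #|B| = 2 -> #|A :&: B| = 2 -> isomorphic g (theta_adj #|T|).
Proof.
move=> cB cAB; have /cards2P [x [y [xy eB]]] : #|B| == 2 by rewrite cB.
have BA : B \subset A by apply/setIidPr/eqP; rewrite eqEcard subsetIr cB cAB.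
have eA : A = ~: [set a; b].
  by rewrite -dominating_connected_cover (setUidPl BA).
have [xA yA] : x \in A /\ y \in A by rewrite !(subsetP BA) // eB ?set21 ?set22.
have [xB yB] : x \in B /\ y \in B by rewrite eB set21 set22.
apply: (@iso_theta _ _ a b x y gs dom).
- move: xA yA xB yB; rewrite !inE => /andP [xb _] /andP [yb _] /andP [xa _] /andP [ya _].
  rewrite /= !inE !negb_or (eq_sym a x) (eq_sym a y) (eq_sym b x) (eq_sym b y).
  by rewrite xb yb xa ya xy (dominating_neq gi dom).
- move=> z; case: (z =P b) => [-> | /eqP zb].
    by rewrite (dominating_adj dom) eq_sym (dominating_neq gi dom).
  by move/setP/(_ z): eA; rewrite !inE zb negb_or zb andbT.
- move=> z; case: (z =P a) => [-> | /eqP za].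
    by rewrite gs (dominating_adj dom) !inE eqxx.
  by move/setP/(_ z): eB; rewrite !inE za (negbTE za).
Qed.
End ConnectedDominating.

Lemma dominating_avm_theta (T : finType) (g : rel T) a b :
  symmetric g -> irreflexive g -> connected_graph g -> #|edges g| = #|T|.+1 ->
  dominating_edge g a b ->
  (avm (theta_adj #|T|) <= avm g)%R /\
  (avm g = avm (theta_adj #|T|) -> isomorphic g (theta_adj #|T|)).
Proof.
move=> gs gi conn hE dom; have [sumAB cAB] := dominating_cards gs gi dom conn hE.
have [cAB_A cAB_B] : #|(nbr g a :\ b) :&: (nbr g b :\ a)| <= #|nbr g a :\ b| /\
                     #|(nbr g a :\ b) :&: (nbr g b :\ a)| <= #|nbr g b :\ a|.
  by split; apply/subset_leq_card; [apply: subsetIl | apply: subsetIr].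
rewrite avm_theta_gt3 ?(avm_dominating gs gi dom) ?cAB; try lia.
split=> [|/avm_dominated_inj eK]; first by rewrite ler_avm_dominated; nia.
have [cB | cA] : #|nbr g b :\ a| = 2 \/ #|nbr g a :\ b| = 2 by nia.
  exact: dominating_theta_iso gs gi dom conn cB cAB.
by apply: dominating_theta_iso gs gi (dominating_edgeC gs dom) conn cA _; rewrite setIC.
Qed.

Section NonDominating.
Variables (T : finType) (g : rel T) (a b : T).
Hypothesis gi : irreflexive g.
Hypothesis nodom : ~~ [exists x, exists y, dominating_edge g x y].
Hypothesis gab : g a b.

Lemma nondominating_matching_card M : maximal_matching g M -> 1 < #|M|.
Proof.
move=> maxM; have [mM _] := maximal_matchingP _ _ maxM.
have M0 : 0 < #|M|.
  case/orP: (maximal_matching_covered maxM gab) => /exists_inP [e eM _];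
  by apply/card_gt0P; exists e.
rewrite ltn_neqAle M0 andbT eq_sym; apply/negP => /cards1P [e Me].
have eM : e \in M by rewrite Me set11.
have /edgesP [x [y [gxy exy]]] := subsetP (matching_sub_edges mM) e eM.
have covE w : covered M w -> (w == x) || (w == y).
  by move=> /exists_inP [e']; rewrite Me inE => /eqP ->; rewrite exy in_set2.
case/negP: nodom; apply/existsP; exists x; apply/existsP; exists y.
rewrite /dominating_edge gxy; apply/forallP => u; apply/forallP => v; apply/implyP => guv.
by case/orP: (maximal_matching_covered maxM guv) => /covE /orP [] ->; rewrite ?orbT.
Qed.

Lemma nondominating_avm_ge2 : (2%:R <= avm g)%R.
Proof.
have [M0 maxM0] := exists_maximal_matching g.
rewrite /avm ler_pdivlMr; last by rewrite ltr0n; apply/card_gt0P; exists M0; rewrite inE.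
rewrite mulrC -natrM ler_nat.
rewrite (eq_bigl (fun M => M \in [set M | maximal_matching g M])); last first.
  by move=> M; rewrite inE.
rewrite -sum1_card big_distrl /=; apply: leq_sum => M; rewrite inE mul1n.
exact: nondominating_matching_card.
Qed.

Lemma nondominating_card : 3 < #|T|.
Proof.
move/existsPn: nodom => /(_ a) /existsPn /(_ b).
rewrite /dominating_edge gab /= => /forallPn [x /forallPn [y]].
rewrite negb_imply !negb_or => /andP [gxy /and4P [xa xb ya yb]].
suff /uniq_size_le_card : uniq [:: a; b; x; y] by [].
rewrite /= !inE !negb_or (eq_sym a x) (eq_sym a y) (eq_sym b x) (eq_sym b y) xa xb ya yb.
by rewrite (contraTneq _ gab) ?(contraTneq _ gxy) // => ->; rewrite gi.
Qed.

Lemma nondominating_avm_theta : (avm (theta_adj #|T|) < avm g)%R.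
Proof.
rewrite avm_theta_gt3 ?nondominating_card //.
exact: lt_le_trans (avm_dominated_lt2 _) nondominating_avm_ge2.
Qed.
End NonDominating.

Theorem theorem2p1 (T : finType) (g : rel T) :
  simple_graph g -> connected_graph g ->
  #|edges g| = #|T|.+1 ->
  (exists p q l, classA g p q l) ->
  (avm (theta_adj #|T|) <= avm g)%R /\
  (avm g = avm (theta_adj #|T|) <-> isomorphic g (theta_adj #|T|)).
Proof.
move=> [gs gi] conn hE _.
case: (boolP [exists a, exists b, dominating_edge g a b]) => [|nodom].
  move=> /existsP [a /existsP [b dom]].
  have [le_theta iso] := dominating_avm_theta gs gi conn hE dom.
  by split=> //; split=> // /avm_iso.
have /card_gt0P [e /edgesP [a [b [gab _]]]] : 0 < #|edges g| by rewrite hE.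
have lt_theta := nondominating_avm_theta gi nodom gab.
split; first exact: ltW.
by split=> [eq_theta | /avm_iso eq_theta]; rewrite eq_theta ltxx in lt_theta.
Qed.
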